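(* Let $(G,* )$ be a topological group which has property ${\sf S}_c(\mathcal{O}_{\sf nbd},\mathcal{O})$ as well as the Hurewicz property. Then for any topological group $(H,* )$ satisfying ${\sf S}_c(\mathcal{O}_{\sf nbd},\Lambda)$, the product group $G\times H$ satisfies ${\sf S}_c(\mathcal{O}_{\sf nbd},\mathcal{O})$.
   Context: For a topological group $(G,* )$ with identity $e$ and a neighborhood $U$ of $e$, $\mathcal{O}(U)=\{x*U:x\in G\}$ and $\mathcal{O}_{\sf nbd}=\{\mathcal{O}(U):U\text{ a neighborhood of }e\}$. $\mathcal{O}$ is the collection of all open covers. An open cover is large if each point of the space is contained in infinitely many elements of the cover; $\Lambda$ denotes the collection of large open covers. A family $\mathcal{B}$ refines $\mathcal{A}$ if every member of $\mathcal{B}$ is contained in some member of $\mathcal{A}$. ${\sf S}_c(\mathcal{A},\mathcal{B})$: for each sequence $(A_n:n<\infty)$ of elements of $\mathcal{A}$ there is a sequence $(B_n:n<\infty)$ such that each $B_n$ is a pairwise disjoint family of open sets refining $A_n$ and $\bigcup_nB_n\in\mathcal{B}$. A space $X$ has the Hurewicz property if for each sequence $(\mathcal{U}_n:n<\infty)$ of open covers of $X$ there are finite $\mathcal{F}_n\subseteq\mathcal{U}_n$ such that for each $x\in X$ the set $\{n:x\notin\bigcup\mathcal{F}_n\}$ is finite. *)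

From Stdlib Require Import List Arith.
Import ListNotations.
Set Implicit Arguments.

Definition family (X : Type) := (X -> Prop) -> Prop.

Record TopGroup := {
  carrier :> Type;
  gop : carrier -> carrier -> carrier;
  ginv : carrier -> carrier;
  gid : carrier;
  opens : family carrier;
  gassoc : forall x y z, gop x (gop y z) = gop (gop x y) z;
  gid_l : forall x, gop gid x = x;
  gid_r : forall x, gop x gid = x;
  ginv_l : forall x, gop (ginv x) x = gid;
  ginv_r : forall x, gop x (ginv x) = gid;
  open_full : opens (fun _ => True);
  open_inter : forall A B, opens A -> opens B -> opens (fun x => A x /\ B x);
  open_union : forall F : family carrier, (forall A, F A -> opens A) ->
                 opens (fun x => exists A, F A /\ A x);
  (* continuity of multiplication G x G -> G (product topology), written out pointwise *)
  gop_cont : forall U, opens U -> forall x y, U (gop x y) ->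
     exists V W, opens V /\ opens W /\ V x /\ W y /\
       forall a b, V a -> W b -> U (gop a b);
  ginv_cont : forall U, opens U -> opens (fun x => U (ginv x))
}.

Section Notions.
Variables (X : Type) (op : X -> X -> X) (e : X) (opens : family X).

Definition set_eq (A B : X -> Prop) := forall y, A y <-> B y.

Definition ltrans (x : X) (U : X -> Prop) : X -> Prop :=
  fun y => exists u, U u /\ y = op x u.

Definition nbd_e (U : X -> Prop) := opens U /\ U e.

Definition Ocov (U : X -> Prop) : family X :=
  fun A => exists x, set_eq A (ltrans x U).

Definition O_nbd : family X -> Prop :=
  fun F => exists U, nbd_e U /\ forall A, F A <-> Ocov U A.

Definition open_cover (F : family X) : Prop :=
  (forall A, F A -> opens A) /\ (forall x, exists A, F A /\ A x).

Definition O_all : family X -> Prop := open_cover.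

(* large open covers: every point lies in infinitely many (distinct) members *)
Definition large_cover (F : family X) : Prop :=
  open_cover F /\
  forall x, ~ exists l : list (X -> Prop),
      forall A, F A -> A x -> exists B, In B l /\ set_eq A B.

Definition Lambda : family X -> Prop := large_cover.

Definition refines (B A : family X) := forall V, B V -> exists W, A W /\ (forall y, V y -> W y).

Definition pairwise_disjoint (B : family X) :=
  forall V W, B V -> B W -> (exists y, V y /\ W y) -> set_eq V W.

Definition Sc (CA CB : family X -> Prop) : Prop :=
  forall An : nat -> family X, (forall n, CA (An n)) ->
    exists Bn : nat -> family X,
      (forall n, pairwise_disjoint (Bn n) /\ (forall V, Bn n V -> opens V)
                 /\ refines (Bn n) (An n)) /\
      CB (fun V => exists n, Bn n V).

Definition Hurewicz : Prop :=
  forall Un : nat -> family X, (forall n, open_cover (Un n)) ->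
    exists Fn : nat -> list (X -> Prop),
      (forall n A, In A (Fn n) -> Un n A) /\
      forall x, exists N, forall n, N <= n -> exists A, In A (Fn n) /\ A x.

End Notions.

Definition prod_op (G H : TopGroup) (p q : G * H) : G * H :=
  (gop G (fst p) (fst q), gop H (snd p) (snd q)).

Definition prod_id (G H : TopGroup) : G * H := (gid G, gid H).

Definition prod_opens (G H : TopGroup) : family (G * H) :=
  fun O => forall p, O p -> exists A B, opens G A /\ opens H B /\
     A (fst p) /\ B (snd p) /\ forall a b, A a -> B b -> O (a, b).

From Stdlib Require Import List Arith Lia ClassicalEpsilon Cantor
  FunctionalExtensionality PropExtensionality.
Import ListNotations.
Set Implicit Arguments.

(* Let (O(W_j))_j be neighbourhood covers of G x H and choose open
   neighbourhoods U_j x V_j of e inside W_j.  Split the index set as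
   j = <k,n> (Cantor pairing).  For each k, S_c(O_nbd,O) in G applied to
   (O(U_<k,n>))_n yields disjoint families C_{k,n} whose union C_k covers G.
   Hurewicz applied to (C_k)_k gives finite F_k in C_k, each point of G lying
   in union F_k for all large k; F_k is contained in C_{k,0} u ... u C_{k,m_k}.
   With V'_k = V_<k,0> n ... n V_<k,m_k>, S_c(O_nbd,Lambda) in H applied to
   (O(V'_k))_k yields disjoint families D_k whose union is large; by
   disjointness each point of H lies in a member of D_k for infinitely many k.
   The boxes C x D with C in C_{k,n}, D in D_k and n <= m_k form the selection
   at index <k,n>: disjoint, open, refining O(W_<k,n>), and covering G x H. *)

Section Selections.
Variables (X : Type) (opens : family X).

Definition selection (B A : family X) : Prop :=
  pairwise_disjoint B /\ (forall V, B V -> opens V) /\ refines B A.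

Lemma selection_target (B A A' : family X) :
  selection B A -> (forall P, A P -> A' P) -> selection B A'.
Proof.
  intros [Hdisj [Hopen Href]] HAA'. split; [exact Hdisj | split; [exact Hopen |]].
  intros V HV. destruct (Href V HV) as [W [HW HVW]]. exists W. auto.
Qed.

Lemma selection_guard (Q : Prop) (B A : family X) :
  (Q -> selection B A) -> selection (fun P => Q /\ B P) A.
Proof.
  intro HQ. split; [| split].
  - intros V W [hQ HV] [_ HW]. exact (proj1 (HQ hQ) V W HV HW).
  - intros V [hQ HV]. exact (proj1 (proj2 (HQ hQ)) V HV).
  - intros V [hQ HV]. exact (proj2 (proj2 (HQ hQ)) V HV).
Qed.

Lemma Sc_from_pairs (A : nat -> family X) (E : nat -> nat -> family X) :
  (forall k n, selection (E k n) (A (to_nat (k, n)))) ->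
  (forall x, exists k n P, E k n P /\ P x) ->
  exists Bn : nat -> family X,
    (forall j, pairwise_disjoint (Bn j) /\ (forall V, Bn j V -> opens V)
               /\ refines (Bn j) (A j)) /\
    O_all opens (fun V => exists j, Bn j V).
Proof.
  intros HE Hcov.
  exists (fun j P => E (fst (of_nat j)) (snd (of_nat j)) P).
  assert (Hj : forall j, to_nat (fst (of_nat j), snd (of_nat j)) = j).
  { intro j. rewrite <- surjective_pairing. apply cancel_to_of. }
  split.
  - intro j. specialize (HE (fst (of_nat j)) (snd (of_nat j))).
    rewrite Hj in HE. exact HE.
  - split.
    + intros P [j HP]. exact (proj1 (proj2 (HE _ _)) P HP).
    + intro x. destruct (Hcov x) as [k [n [P [HP HPx]]]].
      exists P. split; [| exact HPx]. exists (to_nat (k, n)).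
      rewrite cancel_of_to. exact HP.
Qed.

Lemma selection_Ocov_mono (op : X -> X -> X) (B : family X) (V' V : X -> Prop) :
  (forall y, V' y -> V y) ->
  selection B (Ocov op V') -> selection B (Ocov op V).
Proof.
  intros HV'V [Hdisj [Hopen Href]]. split; [exact Hdisj | split; [exact Hopen |]].
  intros P HP. destruct (Href P HP) as [T [[x Ex] HPT]].
  exists (ltrans op x V). split; [exists x; intro y; tauto |].
  intros y Hy. destruct (proj1 (Ex y) (HPT y Hy)) as [u [Hu ->]].
  exists u. split; [exact (HV'V u Hu) | reflexivity].
Qed.

Lemma list_in_initial_segment (C : nat -> family X) (l : list (X -> Prop)) :
  (forall A, In A l -> exists n, C n A) ->
  exists m, forall A, In A l -> exists n, n <= m /\ C n A.
Proof.
  induction l as [| a l IH]; intro Hl.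
  - exists 0. intros A [].
  - destruct IH as [m Hm]. { intros A HA. apply Hl. right. exact HA. }
    destruct (Hl a (or_introl eq_refl)) as [n Hn].
    exists (Nat.max m n). intros A [<- | HA].
    + exists n. split; [lia | exact Hn].
    + destruct (Hm A HA) as [n' [Hn' HC]]. exists n'. split; [lia | exact HC].
Qed.

(* If each D_k is pairwise disjoint, a point y lies in at most one member of
   each D_k (up to extensional equality); hence the members of D_0,...,D_{N-1}
   containing y are represented by a finite list. *)
Lemma finitely_many_members_below (D : nat -> family X) (y : X) (N : nat) :
  (forall k, pairwise_disjoint (D k)) ->
  exists l : list (X -> Prop), forall k A, k < N -> D k A -> A y ->
     exists B, In B l /\ set_eq A B.
Proof.
  intro Hdisj. induction N as [| N IH].
  - exists []. intros; lia.
  - destruct IH as [l Hl].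
    destruct (classic (exists A0, D N A0 /\ A0 y)) as [[A0 [HA0 HA0y]] | Hnone].
    + exists (A0 :: l). intros k A Hk HA HAy.
      destruct (Nat.eq_dec k N) as [-> | Hne].
      * exists A0. split; [left; reflexivity |].
        apply (Hdisj N A A0 HA HA0). exists y. split; assumption.
      * destruct (Hl k A ltac:(lia) HA HAy) as [B [HB HAB]].
        exists B. split; [right; exact HB | exact HAB].
    + exists l. intros k A Hk HA HAy.
      destruct (Nat.eq_dec k N) as [-> | Hne].
      * exfalso. apply Hnone. exists A. split; assumption.
      * apply (Hl k A ltac:(lia) HA HAy).
Qed.

Lemma large_union_recurrent (D : nat -> family X) :
  (forall k, pairwise_disjoint (D k)) ->
  large_cover opens (fun V => exists k, D k V) ->
  forall y N, exists k, N <= k /\ exists Ds, D k Ds /\ Ds y.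
Proof.
  intros Hdisj [_ Hlarge] y N.
  apply NNPP. intro Hnone.
  destruct (finitely_many_members_below D y N Hdisj) as [l Hl].
  apply (Hlarge y). exists l. intros A [k HA] HAy.
  destruct (le_lt_dec N k) as [Hk | Hk].
  - exfalso. apply Hnone. exists k. split; [exact Hk |]. exists A. split; assumption.
  - exact (Hl k A Hk HA HAy).
Qed.

End Selections.

Lemma opens_ext {X : Type} {opens : family X} {A B : X -> Prop} :
  opens A -> (forall y, A y <-> B y) -> opens B.
Proof.
  intros HA HAB. replace B with A; [exact HA |].
  extensionality y. apply propositional_extensionality. apply HAB.
Qed.

Lemma opens_finite_inter (H : TopGroup) (P : nat -> H -> Prop) (m : nat) :
  (forall n, opens H (P n)) -> opens H (fun y => forall n, n <= m -> P n y).
Proof.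
  intro HP. induction m as [| m IH].
  - apply (opens_ext (HP 0)). intro y. split.
    + intros Hy n Hn. replace n with 0 by lia. exact Hy.
    + intro Hy. apply Hy. lia.
  - apply (opens_ext (open_inter H _ _ IH (HP (S m)))). intro y. split.
    + intros [Hy1 Hy2] n Hn. destruct (Nat.eq_dec n (S m)) as [-> | Hne]; auto.
      apply Hy1. lia.
    + intro Hy. split; auto.
Qed.

Lemma Ocov_in_O_nbd (G : TopGroup) (U : G -> Prop) :
  nbd_e (gid G) (opens G) U -> O_nbd (gop G) (gid G) (opens G) (Ocov (gop G) U).
Proof. intro HU. exists U. split; [exact HU | tauto]. Qed.

Lemma hurewicz_row_selection (G : TopGroup) :
  Sc (opens G) (O_nbd (gop G) (gid G) (opens G)) (O_all (opens G)) ->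
  Hurewicz (opens G) ->
  forall U : nat -> nat -> G -> Prop, (forall k n, nbd_e (gid G) (opens G) (U k n)) ->
  exists (C : nat -> nat -> family G) (m : nat -> nat),
    (forall k n, selection (opens G) (C k n) (Ocov (gop G) (U k n))) /\
    forall x, exists N, forall k, N <= k ->
      exists n, n <= m k /\ exists A, C k n A /\ A x.
Proof.
  intros HSc HHur U HU.
  assert (Hrow : forall k, exists Ck : nat -> family G,
    (forall n, selection (opens G) (Ck n) (Ocov (gop G) (U k n))) /\
    O_all (opens G) (fun Z => exists n, Ck n Z)).
  { intro k. apply HSc. intro n. apply Ocov_in_O_nbd. apply HU. }
  destruct (choice _ Hrow) as [C HC].
  destruct (HHur (fun k A => exists n, C k n A)) as [F [HFsub HFcov]].
  { intro k. exact (proj2 (HC k)). }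
  assert (Hbound : forall k, exists m,
    forall A, In A (F k) -> exists n, n <= m /\ C k n A).
  { intro k. apply list_in_initial_segment. intros A HA. exact (HFsub k A HA). }
  destruct (choice _ Hbound) as [m Hm].
  exists C, m. split; [exact (fun k => proj1 (HC k)) |].
  intro x. destruct (HFcov x) as [N HN]. exists N. intros k Hk.
  destruct (HN k Hk) as [A [HA HAx]]. destruct (Hm k A HA) as [n [Hn HCA]].
  exists n. split; [exact Hn |]. exists A. split; assumption.
Qed.

Lemma large_recurrent_selection (H : TopGroup) :
  Sc (opens H) (O_nbd (gop H) (gid H) (opens H)) (Lambda (opens H)) ->
  forall V : nat -> H -> Prop, (forall k, nbd_e (gid H) (opens H) (V k)) ->
  exists D : nat -> family H,
    (forall k, selection (opens H) (D k) (Ocov (gop H) (V k))) /\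
    forall y N, exists k, N <= k /\ exists Ds, D k Ds /\ Ds y.
Proof.
  intros HSc V HV.
  destruct (HSc (fun k => Ocov (gop H) (V k))) as [D [HD Hlarge]].
  { intro k. apply Ocov_in_O_nbd. apply HV. }
  exists D. split; [exact HD |].
  apply (large_union_recurrent (opens := opens H)); [intro k; apply HD | exact Hlarge].
Qed.

Lemma nbd_boxes (G H : TopGroup) (W : nat -> G * H -> Prop) :
  (forall j, nbd_e (prod_id G H) (prod_opens G H) (W j)) ->
  exists (U : nat -> G -> Prop) (V : nat -> H -> Prop),
    (forall j, nbd_e (gid G) (opens G) (U j)) /\
    (forall j, nbd_e (gid H) (opens H) (V j)) /\
    forall j a b, U j a -> V j b -> W j (a, b).
Proof.
  intro HW.
  assert (Hbox : forall j, exists UV : (G -> Prop) * (H -> Prop),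
    (opens G (fst UV) /\ fst UV (gid G)) /\ (opens H (snd UV) /\ snd UV (gid H)) /\
    forall a b, fst UV a -> snd UV b -> W j (a, b)).
  { intro j. destruct (HW j) as [HWo HWe].
    destruct (HWo _ HWe) as [A [B [HA [HB [HAe [HBe HAB]]]]]].
    exists (A, B). simpl. auto. }
  destruct (choice _ Hbox) as [UV HUV].
  exists (fun j => fst (UV j)), (fun j => snd (UV j)).
  split; [| split]; intro j; apply HUV.
Qed.

Definition box {G H : TopGroup} (A : G -> Prop) (B : H -> Prop) : G * H -> Prop :=
  fun p => A (fst p) /\ B (snd p).

Definition box_family {G H : TopGroup} (CG : family G) (DH : family H) : family (G * H) :=
  fun P => exists A B, CG A /\ DH B /\ P = box A B.

(* Translate of a box inside a box: (g u, h v) = (g,h)(u,v). *)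
Lemma box_ltrans {G H : TopGroup} {U : G -> Prop} {V : H -> Prop}
    {W : G * H -> Prop} (g : G) (h : H) :
  (forall a b, U a -> V b -> W (a, b)) ->
  forall p, box (ltrans (gop G) g U) (ltrans (gop H) h V) p ->
            ltrans (prod_op G H) (g, h) W p.
Proof.
  intros HUVW [a b] [Ha Hb]. cbn in Ha, Hb.
  destruct Ha as [u [Hu ->]], Hb as [v [Hv ->]].
  exists (u, v). split; [exact (HUVW u v Hu Hv) | reflexivity].
Qed.

Lemma box_family_selection {G H : TopGroup} {CG : family G} {DH : family H}
    {U : G -> Prop} {V : H -> Prop} {W : G * H -> Prop} :
  selection (opens G) CG (Ocov (gop G) U) ->
  selection (opens H) DH (Ocov (gop H) V) ->
  (forall a b, U a -> V b -> W (a, b)) ->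
  selection (prod_opens G H) (box_family CG DH) (Ocov (prod_op G H) W).
Proof.
  intros [HCdisj [HCopen HCref]] [HDdisj [HDopen HDref]] HUVW. split; [| split].
  - intros P Q [A [B [HA [HB ->]]]] [A' [B' [HA' [HB' ->]]]] [[a b] [[Ha Hb] [Ha' Hb']]].
    assert (EA := HCdisj A A' HA HA' (ex_intro _ a (conj Ha Ha'))).
    assert (EB := HDdisj B B' HB HB' (ex_intro _ b (conj Hb Hb'))).
    intro p. unfold box. rewrite (EA (fst p)), (EB (snd p)). tauto.
  - intros P [A [B [HA [HB ->]]]] p Hp.
    exists A, B. repeat split; try apply Hp; auto.
  - intros P [A [B [HA [HB ->]]]].
    destruct (HCref A HA) as [TA [[g Eg] HATA]].
    destruct (HDref B HB) as [TB [[h Eh] HBTB]].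
    exists (ltrans (prod_op G H) (g, h) W). split.
    + exists (g, h). intro p. tauto.
    + intros p [Hp1 Hp2]. apply (box_ltrans HUVW).
      split; [apply Eg, HATA, Hp1 | apply Eh, HBTB, Hp2].
Qed.

Theorem theorem3p5 (G : TopGroup) :
  Sc (opens G) (O_nbd (gop G) (gid G) (opens G)) (O_all (opens G)) ->
  Hurewicz (opens G) ->
  forall H : TopGroup,
    Sc (opens H) (O_nbd (gop H) (gid H) (opens H)) (Lambda (opens H)) ->
    Sc (prod_opens G H) (O_nbd (prod_op G H) (prod_id G H) (prod_opens G H))
       (O_all (prod_opens G H)).
Proof.
  intros HG HHur H HH An HAn.
  destruct (choice _ HAn) as [W HW].
  destruct (nbd_boxes W (fun j => proj1 (HW j))) as [U [V [HU [HV HUVW]]]].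
  destruct (hurewicz_row_selection G HG HHur (fun k n => U (to_nat (k, n))))
    as [C [m [HC HCrec]]]; [intros k n; apply HU |].
  set (V' := fun k y => forall n, n <= m k -> V (to_nat (k, n)) y).
  destruct (large_recurrent_selection H HH V') as [D [HD HDrec]].
  { intro k. split.
    - apply opens_finite_inter. intro n. apply HV.
    - intros n _. apply HV. }
  apply (Sc_from_pairs An (fun k n P => n <= m k /\ box_family (C k n) (D k) P)).
  - intros k n. apply selection_guard. intro Hn.
    apply (selection_target (A := Ocov (prod_op G H) (W (to_nat (k, n))))).
    + apply (box_family_selection (V := V (to_nat (k, n))) (HC k n)); [| apply HUVW].
      apply (selection_Ocov_mono (V' := V' k)); [intros y Hy; exact (Hy n Hn) | apply HD].
    + intros P HP. apply (proj2 (HW _)). exact HP.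
  - (* x is served by every row k >= N, and y by some such row. *)
    intros [x y]. destruct (HCrec x) as [N HN].
    destruct (HDrec y N) as [k [Hk [Ds [HDs HDsy]]]].
    destruct (HN k Hk) as [n [Hn [A [HA HAx]]]].
    exists k, n, (box A Ds). split; [split; [exact Hn | exists A, Ds; auto] |].
    split; assumption.
Qed.
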